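(* Let $(M,d,e)$ be a commutative comonoid in the symmetric monoidal category $\mathcal{C}_G$ of payoff Conway games. Then $M$ is a negative Conway game, i.e. every initial move of $M$ is an Opponent move.
   Context: A Conway game $A=(V_A,E_A,\lambda_A)$ is a rooted directed graph with root $\star_A$ and polarity $\lambda_A:E_A\to\{-1,+1\}$ ($-1$ Opponent, $+1$ Player); an initial move is an edge leaving $\star_A$. Plays are paths from the root; a strategy on $A$ is a set of alternating even-length plays containing the empty play, whose nonempty plays start with an Opponent move, closed under even-length prefixes and deterministic. A payoff game additionally has $\kappa_A=(\kappa^+_A,\kappa^-_A)$ from paths to $\mathbb{N}\times\mathbb{N}$ with: $\lambda_A(m)=-1\Rightarrow\kappa^+_A(m)=0$, $\lambda_A(m)=+1\Rightarrow\kappa^-_A(m)=0$; $\kappa_A(t)\le\kappa_A(s;t)$; $\kappa_A(s;t)\le\kappa_A(s)+\kappa_A(t)$; empty paths have payoff $(0,0)$. $A^*$ reverses polarities and swaps $\kappa^+,\kappa^-$; $A\otimes B$ is the product graph (moves in either component, polarity and payoff summed from projections); $1$ is the one-position game. $\mathcal{C}_G$ has payoff games as objects and as morphisms $A\to B$ the winning strategies on $A^*\otimes B$ (those whose every played path $s$ satisfies $\kappa^+(s)=0\Rightarrow\kappa^-(s)=0$), composed by parallel composition and hiding, with copycat identities; it is symmetric monoidal with $\otimes$, unit $1$ and symmetry $\alpha_{A,B}:A\otimes B\to B\otimes A$ the copycat strategy swapping components. A commutative comonoid is an object $M$ with $d:M\to M\otimes M$ and $e:M\to 1$ satisfying coassociativity,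 counit laws and $d;\alpha_{M,M}=d$. *)

From mathcomp Require Import all_boot.
Set Implicit Arguments. Unset Strict Implicit. Unset Printing Implicit Defensive.

(** Polarity: [gpol e = true] means Player (+1), [false] means Opponent (-1). *)
Record arena := Arena {
  gV : Type;
  gE : Type;
  gsrc : gE -> gV;
  gtgt : gE -> gV;
  groot : gV;
  gpol : gE -> bool;
  gkp : seq gE -> nat;
  gkm : seq gE -> nat
}.
Arguments gsrc : clear implicits.
Arguments gtgt : clear implicits.
Arguments groot : clear implicits.
Arguments gpol : clear implicits.
Arguments gkp : clear implicits.
Arguments gkm : clear implicits.

Fixpoint chain (G : arena) (s : seq (gE G)) : Prop :=
  match s with
  | [::] => True
  | e :: s' =>
      match s' with
      | [::] => True
      | f :: _ => gtgt G e = gsrc G f /\ chain s'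
      end
  end.

Fixpoint path_from (G : arena) (v : gV G) (s : seq (gE G)) : Prop :=
  match s with
  | [::] => True
  | e :: s' => gsrc G e = v /\ path_from (gtgt G e) s'
  end.

Definition play (G : arena) (s : seq (gE G)) : Prop := path_from (groot G) s.

Fixpoint alt_from (G : arena) (b : bool) (s : seq (gE G)) : Prop :=
  match s with
  | [::] => True
  | e :: s' => gpol G e = b /\ alt_from (~~ b) s'
  end.

Definition alternating (G : arena) (s : seq (gE G)) : Prop := alt_from false s.

Definition payoff_game (G : arena) : Prop :=
  (forall m, gpol G m = false -> gkp G [:: m] = 0) /\
  (forall m, gpol G m = true -> gkm G [:: m] = 0) /\
  (forall s t, chain (s ++ t) ->
     gkp G t <= gkp G (s ++ t) /\ gkm G t <= gkm G (s ++ t)) /\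
  (forall s t, chain (s ++ t) ->
     gkp G (s ++ t) <= gkp G s + gkp G t /\ gkm G (s ++ t) <= gkm G s + gkm G t) /\
  gkp G [::] = 0 /\ gkm G [::] = 0.

Definition negative (G : arena) : Prop :=
  forall m, gsrc G m = groot G -> gpol G m = false.

Definition dual (A : arena) : arena :=
  {| gV := gV A; gE := gE A; gsrc := @gsrc A; gtgt := @gtgt A; groot := groot A;
     gpol := fun m => ~~ gpol A m; gkp := @gkm A; gkm := @gkp A |}.

Definition tE (A B : arena) : Type := (gE A * gV B + gV A * gE B)%type.

Definition projL (A B : arena) (e : tE A B) : option (gE A) :=
  match e with inl (a, _) => Some a | inr _ => None end.
Definition projR (A B : arena) (e : tE A B) : option (gE B) :=
  match e with inl _ => None | inr (_, b) => Some b end.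

Definition tensor (A B : arena) : arena :=
  {| gV := (gV A * gV B)%type;
     gE := tE A B;
     gsrc := fun e => match e with
                      | inl (a, y) => (gsrc A a, y)
                      | inr (x, b) => (x, gsrc B b) end;
     gtgt := fun e => match e with
                      | inl (a, y) => (gtgt A a, y)
                      | inr (x, b) => (x, gtgt B b) end;
     groot := (groot A, groot B);
     gpol := fun e => match e with
                      | inl (a, _) => gpol A a
                      | inr (_, b) => gpol B b end;
     gkp := fun s => gkp A (pmap (@projL A B) s) + gkp B (pmap (@projR A B) s);
     gkm := fun s => gkm A (pmap (@projL A B) s) + gkm B (pmap (@projR A B) s) |}.

Definition unitg : arena :=
  {| gV := unit; gE := Empty_set; gsrc := fun e => match e with end;
     gtgt := fun e => match e with end; groot := tt;
     gpol := fun e => match e with end; gkp := fun _ => 0; gkm := fun _ => 0 |}.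

Definition strategy (G : arena) (sigma : seq (gE G) -> Prop) : Prop :=
  sigma [::] /\
  (forall s, sigma s -> play s /\ alternating s /\ ~~ odd (size s)) /\
  (forall s n, sigma s -> ~~ odd n -> sigma (take n s)) /\
  (forall s m n n', sigma (s ++ [:: m; n]) -> sigma (s ++ [:: m; n']) -> n = n').

Definition winning (G : arena) (sigma : seq (gE G) -> Prop) : Prop :=
  forall s, sigma s -> gkp G s = 0 -> gkm G s = 0.

Definition Hom (A B : arena) : Type := seq (gE (tensor (dual A) B)) -> Prop.

Definition morphism (A B : arena) (sigma : Hom A B) : Prop :=
  strategy sigma /\ winning sigma.

Definition heq (A B : arena) (sigma tau : Hom A B) : Prop :=
  forall s, sigma s <-> tau s.

(** composition by parallel composition and hiding.
    Interaction sequences are paths from the root in the product graph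
    (A (x) B) (x) C (positions V_A * V_B * V_C). *)
Definition pAB (A B C : arena) (e : gE (tensor (tensor A B) C))
  : option (gE (tensor (dual A) B)) :=
  match e with inl (x, _) => Some x | inr _ => None end.
Definition pBC (A B C : arena) (e : gE (tensor (tensor A B) C))
  : option (gE (tensor (dual B) C)) :=
  match e with
  | inl (inl _, _) => None
  | inl (inr (_, b), z) => Some (inl (b, z))
  | inr ((_, y), c) => Some (inr (y, c))
  end.
Definition pAC (A B C : arena) (e : gE (tensor (tensor A B) C))
  : option (gE (tensor (dual A) C)) :=
  match e with
  | inl (inl (a, _), z) => Some (inl (a, z))
  | inl (inr _, _) => None
  | inr ((x, _), c) => Some (inr (x, c))
  end.

Definition compose (A B C : arena) (sigma : Hom A B) (tau : Hom B C) : Hom A C :=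
  fun s => exists u : seq (gE (tensor (tensor A B) C)),
    play u /\ sigma (pmap (@pAB A B C) u) /\ tau (pmap (@pBC A B C) u) /\
    s = pmap (@pAC A B C) u.

Definition tAB (A B C D : arena)
  (e : gE (tensor (dual (tensor A C)) (tensor B D))) : option (gE (tensor (dual A) B)) :=
  match e with
  | inl (inl (a, _), (y, _)) => Some (inl (a, y))
  | inl (inr _, _) => None
  | inr ((x, _), inl (b, _)) => Some (inr (x, b))
  | inr (_, inr _) => None
  end.
Definition tCD (A B C D : arena)
  (e : gE (tensor (dual (tensor A C)) (tensor B D))) : option (gE (tensor (dual C) D)) :=
  match e with
  | inl (inl _, _) => None
  | inl (inr (_, c), (_, w)) => Some (inl (c, w))
  | inr (_, inl _) => None
  | inr ((_, z), inr (_, d)) => Some (inr (z, d))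
  end.

Definition tens (A B C D : arena) (sigma : Hom A B) (tau : Hom C D)
  : Hom (tensor A C) (tensor B D) :=
  fun s => play s /\ alternating s /\ ~~ odd (size s) /\
    sigma (pmap (@tAB A B C D) s) /\ tau (pmap (@tCD A B C D) s).

Definition copycat (A B : arena) (f : gE A -> gE B) : Hom A B :=
  fun s => play s /\ alternating s /\ ~~ odd (size s) /\
    forall n, ~~ odd n ->
      map f (pmap (@projL (dual A) B) (take n s)) = pmap (@projR (dual A) B) (take n s).

Definition idg (A : arena) : Hom A A := copycat (fun e : gE A => e).

Definition swapE (A B : arena) (e : gE (tensor A B)) : gE (tensor B A) :=
  match e with inl (a, y) => inr (y, a) | inr (x, b) => inl (b, x) end.
Definition sym (A B : arena) : Hom (tensor A B) (tensor B A) := copycat (@swapE A B).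

Definition assocE (A B C : arena) (e : gE (tensor (tensor A B) C))
  : gE (tensor A (tensor B C)) :=
  match e with
  | inl (inl (a, y), z) => inl (a, (y, z))
  | inl (inr (x, b), z) => inr (x, inl (b, z))
  | inr ((x, y), c) => inr (x, inr (y, c))
  end.
Definition assoc (A B C : arena) : Hom (tensor (tensor A B) C) (tensor A (tensor B C)) :=
  copycat (@assocE A B C).

Definition lunitE (A : arena) (e : gE (tensor unitg A)) : gE A :=
  match e with inl (v, _) => match v with end | inr (_, a) => a end.
Definition lunit (A : arena) : Hom (tensor unitg A) A := copycat (@lunitE A).

Definition runitE (A : arena) (e : gE (tensor A unitg)) : gE A :=
  match e with inl (a, _) => a | inr (_, v) => match v with end end.
Definition runit (A : arena) : Hom (tensor A unitg) A := copycat (@runitE A).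

Arguments idg : clear implicits.
Arguments sym : clear implicits.
Arguments assoc : clear implicits.
Arguments lunit : clear implicits.
Arguments runit : clear implicits.

Definition comm_comonoid (M : arena) (d : Hom M (tensor M M)) (e : Hom M unitg) : Prop :=
  morphism d /\ morphism e /\
  heq (compose (compose d (tens d (idg M))) (assoc M M M))
      (compose d (tens (idg M) d)) /\
  heq (compose (compose d (tens e (idg M))) (lunit M)) (idg M) /\
  heq (compose (compose d (tens (idg M) e)) (runit M)) (idg M) /\
  heq (compose d (sym M M)) d.

(* Suppose M had an initial Player move m.  Then the copycat identity contains the
   play (m in M^*, m in M), so by the left counit law this play arises from
   d;(e (x) id).  Following the hidden interaction backwards, the visible Player
   reply in the codomain forces a Player reply in the codomain at each stage, so d
   answers the opening move m by a Player move b in M (x) M.  Cocommutativity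
   d;swap = d makes d answer the same move by swap b as well, which lies in the
   other component of M (x) M: this contradicts determinism. *)

From mathcomp Require Import all_boot.
Set Implicit Arguments. Unset Strict Implicit. Unset Printing Implicit Defensive.

Lemma strategy_prefix2 (G : arena) (sigma : seq (gE G) -> Prop) m n s :
  strategy sigma -> sigma (m :: n :: s) -> sigma [:: m; n].
Proof. by move=> [_ [_ [sigma_take _]]] /(sigma_take _ 2); rewrite /= take0; apply. Qed.

Lemma copycat_initial (A B : arena) (f : gE A -> gE B) (a : gE A) :
  gsrc A a = groot A -> gpol A a -> gsrc B (f a) = groot B -> gpol B (f a) ->
  copycat f [:: inl (a, groot B); inr (gtgt A a, f a)].
Proof.
move=> a_init a_pl fa_init fa_pl.
rewrite /copycat /play /alternating /= a_init a_pl fa_init fa_pl.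
by do !split => //; case=> [|[|n]].
Qed.

Lemma compose_copycat_reply (A B C : arena) (sigma : Hom A B) (f : gE B -> gE C)
    (a : gE A) (b : gE B) :
  gsrc A a = groot A -> gsrc B b = groot B -> gpol B b ->
  gsrc C (f b) = groot C -> gpol C (f b) ->
  sigma [:: inl (a, groot B); inr (gtgt A a, b)] ->
  compose sigma (copycat f) [:: inl (a, groot C); inr (gtgt A a, f b)].
Proof.
move=> a_init b_init b_pl fb_init fb_pl sigma_ab.
exists [:: inl (inl (a, groot B), groot C); inl (inr (gtgt A a, b), groot C);
          inr ((gtgt A a, gtgt B b), f b)].
split; first by rewrite /play /= a_init b_init fb_init.
by split=> //; split=> //; apply: copycat_initial.
Qed.

Section Swap.
Variables A B : arena.

Lemma gsrc_swapE (m : gE (tensor A B)) :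
  gsrc (tensor B A) (swapE m) = ((gsrc (tensor A B) m).2, (gsrc (tensor A B) m).1).
Proof. by case: m => [[]|[]]. Qed.

Lemma gpol_swapE (m : gE (tensor A B)) : gpol (tensor B A) (swapE m) = gpol (tensor A B) m.
Proof. by case: m => [[]|[]]. Qed.

End Swap.

Lemma swapE_neq (A : arena) (m : gE (tensor A A)) : swapE m <> m.
Proof. by case: m => [[]|[]]. Qed.

(* Composing with the symmetry moves the reply to the other component of B (x) B,
   contradicting determinism. *)
Lemma cocommutative_no_codomain_reply (A B : arena) (d : Hom A (tensor B B)) :
  strategy d -> heq (compose d (sym B B)) d ->
  forall a v x b s, ~ d (inl (a, v) :: inr (x, b) :: s).
Proof.
move=> d_strat d_sym a v x b s /(strategy_prefix2 d_strat) d_ab.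
have [[[a_init v_root] [[x_tgt b_root] _]] [[_ [b_pl _]] _]] := d_strat.2.1 _ d_ab.
subst v x.
have b_init : gsrc (tensor B B) b = groot (tensor B B) := b_root.
have d_swap : d [:: inl (a, groot (tensor B B)); inr (gtgt A a, swapE b)].
  apply/d_sym/compose_copycat_reply => //.
  - by rewrite gsrc_swapE b_init.
  - by rewrite gpol_swapE.
by case: (d_strat.2.2.2 [::] _ _ _ d_ab d_swap) => /esym/swapE_neq.
Qed.

Definition early_right_player_move (A B : arena) (s : seq (gE (tensor A B))) : Prop :=
  match s with
  | inr (_, c) :: _ | inl _ :: inr (_, c) :: _ => gpol B c
  | _ => False
  end.

Lemma early_right_player_move_alternating (A B : arena) (s : seq (gE (tensor A B))) :
  early_right_player_move s -> alternating s ->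
  exists m n t, s = inl m :: inr n :: t.
Proof.
rewrite /alternating; case: s => [|[m|[x c]] t] //=.
  by case: t => [|[m'|n] t] // _ _; exists m, n, t.
by move=> c_pl [c_op _]; rewrite c_pl in c_op.
Qed.

(* A visible Player move in C cannot open the play of the second strategy, so it
   must have been prompted by a Player move of the first strategy in B. *)
Lemma compose_early_right_player_move (A B C : arena) (u : seq (gE (tensor (tensor A B) C))) :
  alternating (pmap (@pBC A B C) u) ->
  early_right_player_move (pmap (@pAC A B C) u) ->
  early_right_player_move (pmap (@pAB A B C) u).
Proof.
rewrite /alternating.
case: u => [|[[[[? ?]|[? ?]] ?]|[[? ?] ?]] u] //=.
- case: u => [|[[[[? ?]|[? ?]] ?]|[[? ?] ?]] u] //=.
    by move=> [/negbFE].
  by move=> [c_op _] c_pl; rewrite c_pl in c_op.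
- by move=> [/negbFE].
- by move=> [c_op _] c_pl; rewrite c_pl in c_op.
Qed.

Theorem mainTheorem6 (M : arena) (d : Hom M (tensor M M)) (e : Hom M unitg) :
  payoff_game M -> comm_comonoid d e -> negative M.
Proof.
move=> _ [[d_strat _] [_ [_ [counit_l [_ cocomm]]]]] m m_init.
apply/negbTE/negP => m_pl.
have /counit_l := copycat_initial (f := fun m : gE M => m) m_init m_pl m_init m_pl.
case=> u1 [_ [[u2 [_ [d_u2 [eid_u2 u2_AC]]]] [lunit_u1 u1_AC]]].
have reply1 : early_right_player_move (pmap (@pAC _ _ _) u1) by rewrite -u1_AC.
have := compose_early_right_player_move lunit_u1.2.1 reply1.
rewrite u2_AC => /(compose_early_right_player_move eid_u2.2.1).
case/early_right_player_move_alternating; first exact: (d_strat.2.1 _ d_u2).2.1.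
move=> [a v] [[x b] [s d_ab]]; rewrite d_ab in d_u2.
exact: cocommutative_no_codomain_reply d_u2.
Qed.
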